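(* Let $\varphi=\frac{1+\sqrt5}{2}$ and for every integer $k$ let $F_k=\frac{\varphi^k-(-1/\varphi)^k}{\varphi+1/\varphi}$. On the complex vector space with basis $\{|n_1,n_2\rangle:n_1,n_2\ge0\}$ define, for $i=1,2$, operators $N_i$, $b_i$, $b_i^+$ acting on the $i$-th index by $N_1|n_1,n_2\rangle=n_1|n_1,n_2\rangle$, $b_1^+|n_1,n_2\rangle=\sqrt{F_{n_1+1}}|n_1+1,n_2\rangle$, $b_1|n_1,n_2\rangle=\sqrt{F_{n_1}}|n_1-1,n_2\rangle$ (zero if $n_1=0$), and analogously for index 2. Let $(-1)^{-N_2/2}$ be the diagonal operator acting on $|n_1,n_2\rangle$ by $e^{-i\pi n_2/2}$, let $J_z=\frac{N_1-N_2}2$, and let $[2J_z]_F$ be the diagonal operator acting by $F_{n_1-n_2}$. Define $$\tilde J_+^F=(-1)^{-N_2/2}b_1^+b_2,\qquad \tilde J_-^F=b_2^+b_1(-1)^{-N_2/2},\qquad \tilde J_z^F=J_z.$$ Then $$\tilde J_+^F\tilde J_-^F+\tilde J_-^F\tilde J_+^F=[2J_z]_F,\qquad [\tilde J_z^F,\tilde J_\pm^F]=\pm\tilde J_\pm^F.$$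
   Context: $[A,B]=AB-BA$. *)

From mathcomp Require Import all_boot all_order all_algebra all_field.
Set Implicit Arguments. Unset Strict Implicit. Unset Printing Implicit Defensive.
Import Order.TTheory GRing.Theory Num.Theory.
Local Open Scope ring_scope.

Definition phi : algC := (1 + sqrtC 5) / 2.
Definition Fib (k : int) : algC :=
  (phi ^ k - (- phi^-1) ^ k) / (phi + phi^-1).

(* A vector of the space with basis |n1,n2> is given by its coefficients
   v n1 n2 (coefficient of |n1,n2>); vectors of the space are the finitely
   supported ones. *)
Definition vec := nat -> nat -> algC.
Definition fin_supp (v : vec) : Prop :=
  exists M : nat, forall n1 n2, (M <= n1 + n2)%N -> v n1 n2 = 0.
Definition op := vec -> vec.

(* Operators, written in coefficient form; e.g. b1p is the linear map with
   b1^+ |n1,n2> = sqrt(F_{n1+1}) |n1+1,n2>, and b1 |n1,n2> = sqrt(F_{n1}) |n1-1,n2>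
   (0 if n1 = 0). *)
Definition N1 : op := fun v n1 n2 => n1%:R * v n1 n2.
Definition N2 : op := fun v n1 n2 => n2%:R * v n1 n2.
Definition b1p : op := fun v n1 n2 =>
  if n1 is m.+1 then sqrtC (Fib (m.+1)%:Z) * v m n2 else 0.
Definition b2p : op := fun v n1 n2 =>
  if n2 is m.+1 then sqrtC (Fib (m.+1)%:Z) * v n1 m else 0.
Definition b1 : op := fun v n1 n2 => sqrtC (Fib (n1.+1)%:Z) * v n1.+1 n2.
Definition b2 : op := fun v n1 n2 => sqrtC (Fib (n2.+1)%:Z) * v n1 n2.+1.

(* (-1)^{-N2/2} : |n1,n2> |-> e^{-i pi n2/2} |n1,n2> = (-i)^{n2} |n1,n2>. *)
Definition phaseN2 : op := fun v n1 n2 => (- 'i) ^+ n2 * v n1 n2.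
Definition Jz : op := fun v n1 n2 => ((n1%:R - n2%:R) / 2) * v n1 n2.
Definition twoJzF : op := fun v n1 n2 => Fib (n1%:Z - n2%:Z) * v n1 n2.

Definition opcomp (A B : op) : op := fun v => A (B v).
Definition opadd (A B : op) : op := fun v n1 n2 => A v n1 n2 + B v n1 n2.
Definition opsub (A B : op) : op := fun v n1 n2 => A v n1 n2 - B v n1 n2.
Definition opopp (A : op) : op := fun v n1 n2 => - A v n1 n2.
Definition commut (A B : op) : op := opsub (opcomp A B) (opcomp B A).

Definition JpF : op := opcomp phaseN2 (opcomp b1p b2).
Definition JmF : op := opcomp b2p (opcomp b1 phaseN2).
Definition JzF : op := Jz.

(** Both products [J+ J-] and [J- J+] are diagonal: the square roots recombine
    into Fibonacci numbers and the two phases into [(-1)^n2], giving the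
    eigenvalues [(-1)^n2 F_n1 F_(n2+1)] and [-(-1)^n2 F_n2 F_(n1+1)] on
    [|n1,n2>]. Their sum is [F_(n1-n2)] by d'Ocagne's identity, which is a
    direct consequence of Binet's formula. The commutation relations hold
    because [J+] (resp. [J-]) maps the [J_z]-eigenspace of weight [w] into
    that of weight [w+1] (resp. [w-1]). *)

From mathcomp Require Import all_boot all_order all_algebra all_field ring.
From Stdlib Require Import FunctionalExtensionality.
Import Order.TTheory GRing.Theory Num.Theory.
Local Open Scope ring_scope.
Set Implicit Arguments. Unset Strict Implicit. Unset Printing Implicit Defensive.

Section Binet.
Variables (F : fieldType) (x y : F).
Hypotheses (x_neq0 : x != 0) (y_neq0 : y != 0) (x_neq_y : x != y).

Definition binet (k : int) : F := (x ^ k - y ^ k) / (x - y).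

Lemma binet_dOcagne (a b : nat) :
  binet a%:Z * binet b.+1%:Z - binet b%:Z * binet a.+1%:Z
    = (x * y) ^+ b * binet (a%:Z - b%:Z).
Proof.
have d_neq0 : x - y != 0 by rewrite subr_eq0.
rewrite /binet; set X := x ^ (a%:Z - b%:Z); set Y := y ^ (a%:Z - b%:Z).
have xaE : x ^+ a = X * x ^+ b by rewrite /X !exprnP -expfzDr // subrK.
have yaE : y ^+ a = Y * y ^+ b by rewrite /Y !exprnP -expfzDr // subrK.
rewrite -!exprnP !exprS xaE yaE exprMn.
by field.
Qed.

End Binet.

Lemma phi_gt0 : 0 < phi.
Proof. by rewrite /phi divr_gt0 // ltr_wpDr // sqrtC_ge0. Qed.

Lemma FibE (k : int) : Fib k = binet phi (- phi^-1) k.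
Proof. by rewrite /Fib /binet opprK. Qed.

Lemma Fib0 : Fib 0 = 0.
Proof. by rewrite /Fib !expr0z subrr mul0r. Qed.

Lemma Fib_dOcagne (a b : nat) :
  (-1) ^+ b * (Fib a%:Z * Fib b.+1%:Z - Fib b%:Z * Fib a.+1%:Z) = Fib (a%:Z - b%:Z).
Proof.
have phi_neq0 : phi != 0 by rewrite gt_eqF // phi_gt0.
have phi_neq_y : phi != - phi^-1.
  by rewrite -subr_eq0 opprK gt_eqF // addr_gt0 // ?invr_gt0 phi_gt0.
rewrite !FibE binet_dOcagne ?oppr_eq0 ?invr_eq0 //.
by rewrite mulrN divff // mulrA -exprMn mulrNN mulr1 expr1n mul1r.
Qed.

Lemma phase_sqr (n : nat) : (- 'i) ^+ n * (- 'i) ^+ n = (-1) ^+ n :> algC.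
Proof. by rewrite -exprMn mulrNN -expr2 sqrCi. Qed.

Lemma JpF_JmF_coef v n1 n2 :
  opcomp JpF JmF v n1 n2 = (-1) ^+ n2 * Fib n1 * Fib n2.+1 * v n1 n2.
Proof.
rewrite /opcomp /JpF /JmF /opcomp /phaseN2 /b1p /b2p /b1 /b2.
case: n1 => [|a]; first by rewrite Fib0 !(mulr0, mul0r).
rewrite -phase_sqr.
rewrite -[Fib a.+1%:Z in RHS]sqrtCK -[Fib n2.+1%:Z in RHS]sqrtCK; ring.
Qed.

Lemma JmF_JpF_coef v n1 n2 :
  opcomp JmF JpF v n1 n2 = - ((-1) ^+ n2 * Fib n2 * Fib n1.+1) * v n1 n2.
Proof.
rewrite /opcomp /JpF /JmF /opcomp /phaseN2 /b1p /b2p /b1 /b2.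
case: n2 => [|b]; first by rewrite Fib0 !(mulr0, mul0r, oppr0).
rewrite exprS -phase_sqr.
rewrite -[Fib b.+1%:Z in RHS]sqrtCK -[Fib n1.+1%:Z in RHS]sqrtCK; ring.
Qed.

Lemma anticommut_JpF_JmF v n1 n2 :
  opadd (opcomp JpF JmF) (opcomp JmF JpF) v n1 n2 = twoJzF v n1 n2.
Proof.
rewrite /opadd JpF_JmF_coef JmF_JpF_coef /twoJzF -Fib_dOcagne; ring.
Qed.

Lemma commut_Jz_weight_shift (A : op) (s : algC) :
  (forall v n1 n2, A (Jz v) n1 n2 = ((n1%:R - n2%:R) / 2 - s) * A v n1 n2) ->
  forall v n1 n2, commut Jz A v n1 n2 = s * A v n1 n2.
Proof. by move=> AJz v n1 n2; rewrite /commut /opsub /opcomp AJz /Jz; ring. Qed.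

Lemma JpF_Jz v n1 n2 :
  JpF (Jz v) n1 n2 = ((n1%:R - n2%:R) / 2 - 1) * JpF v n1 n2.
Proof.
case: n1 => [|a]; first by rewrite /JpF /opcomp /phaseN2 /b1p !mulr0.
rewrite /JpF /opcomp /phaseN2 /b1p /b2 /Jz !mulrSr; field.
by [].
Qed.

Lemma JmF_Jz v n1 n2 :
  JmF (Jz v) n1 n2 = ((n1%:R - n2%:R) / 2 + 1) * JmF v n1 n2.
Proof.
case: n2 => [|b]; first by rewrite /JmF /opcomp /b2p mulr0.
rewrite /JmF /opcomp /phaseN2 /b2p /b1 /Jz !mulrSr; field.
by [].
Qed.

(* The identities hold coefficientwise for every vector. *)
Theorem mainTheorem15 :
  forall v : vec, fin_supp v ->
    opadd (opcomp JpF JmF) (opcomp JmF JpF) v = twoJzF v /\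
    commut JzF JpF v = JpF v /\
    commut JzF JmF v = opopp JmF v.
Proof.
move=> v _; split; [|split]; do 2 apply: functional_extensionality => ?.
- exact: anticommut_JpF_JmF.
- by rewrite (commut_Jz_weight_shift JpF_Jz) mul1r.
- by rewrite (@commut_Jz_weight_shift _ (-1)) ?mulN1r // => w m1 m2;
    rewrite JmF_Jz opprK.
Qed.
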